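(* Let $a,q$ be positive integers with $q\ne1$ and $(a,q)=1$. Let $U=2^J\cdot3^3$ with $5\le J\ll1$ and $W=U\prod_{5\le p\le w}p$ with $10^{10^{10}}\le w\ll1$, and let $Wn+b$ be amenable. Let $V\ge1$ be an integer with $(q,V)=1$. Then $$\Bigg|\sum_{\substack{n\bmod q\\(WVn+b,q)=1\\(WVn+b-1,s(q))=1}}e\Big(\frac aqn\Big)\Bigg|\le\tau(q)\cdot1_{(q,W)=1}.$$
   Context: $e(t)=e^{2\pi it}$, $\tau$ is the divisor function. $s(n)=\prod_{p\mid n,\ p\equiv-1\ (4),\ p\ne3}p$. A linear polynomial $Kn+b$ ($K\ge1$) is amenable if (i) $6^3\mid K$; (ii) $(b,K)=(b-1,s(K))=1$; (iii) $b-1=2^j3^{2t}(4h+1)$ for some $h\in\mathbb{Z}$ with $3\nmid4h+1$ and $j,t\ge0$ with $2^{j+2}3^{2t+1}\mid K$. *)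

From HB Require Import structures.
From mathcomp Require Import all_boot all_order all_algebra.
From mathcomp Require Import reals trigo.
From mathcomp Require Import complex.
Set Implicit Arguments. Unset Strict Implicit. Unset Printing Implicit Defensive.
Import Order.TTheory GRing.Theory Num.Theory.
Local Open Scope ring_scope.
Local Open Scope complex_scope.

Definition e (R : realType) (t : R) : R[i] :=
  (cos (2 * pi * t)) +i* (sin (2 * pi * t)).

Definition tau (n : nat) : nat := size (divisors n).

Definition s (n : nat) : nat :=
  \prod_(p <- primes n | (p %% 4 == 3)%N && (p != 3%N)) p.

Definition amenable (K : nat) (b : int) : Prop :=
  [/\ (1 <= K)%N,
      (6 ^ 3 %| K)%N,
      coprimez b K%:Z /\ coprimez (b - 1) (s K)%:Z &
      exists (j t : nat) (h : int),
        [/\ b - 1 = (2 ^ j * 3 ^ (2 * t))%:Z * (4 * h + 1),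
            ~~ (3 %| 4 * h + 1)%Z &
            (2 ^ (j + 2) * 3 ^ (2 * t + 1) %| K)%N]].

Definition UU (J : nat) : nat := (2 ^ J * 3 ^ 3)%N.

Definition WW (J w : nat) : nat :=
  (UU J * \prod_(5 <= p < w.+1 | prime p) p)%N.

(* Write x_n = W V n + b.  For a prime p | q, the summation condition asks that
   x_n avoid 0 mod p and, when p = 3 mod 4 and p <> 3, also 1 mod p.
   If some p | q divides W, the condition is periodic in n with period q/p < q,
   and the sum vanishes because e(a (q/p) / q) <> 1.
   Otherwise W V is invertible mod q.  Expanding the indicator prime by prime as
   1 - [p | x_n] - [p special] [p | x_n - 1] writes the sum as a signed
   combination of sums of e(a n / q) over a single residue class n mod d, with
   d | q.  Such a sum vanishes for d < q and has modulus at most 1 for d = q,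
   and at most 2^omega(q) terms have d = q; finally 2^omega(q) <= tau(q). *)

From HB Require Import structures.
From mathcomp Require Import all_boot all_order all_algebra.
From mathcomp Require Import reals trigo complex.
From mathcomp Require Import ring lra.
Set Implicit Arguments. Unset Strict Implicit. Unset Printing Implicit Defensive.
Import Order.TTheory GRing.Theory Num.Theory.

Lemma prime_dvd_prod_primes (p : nat) (l : seq nat) : prime p -> all prime l ->
  (p %| \prod_(r <- l) r) = (p \in l).
Proof.
move=> p_pr /allP l_pr; rewrite Euclid_dvd_prod // big_has.
apply/hasP/idP => [[r rl pr] | pl]; last by exists p => //; exact: dvdnn.
by move: pr; rewrite (dvdn_prime2 p_pr (l_pr r rl)) => /eqP->.
Qed.

Lemma coprime_prod_primes (p : nat) (l : seq nat) : prime p -> all prime l ->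
  p \notin l -> coprime p (\prod_(r <- l) r).
Proof. by move=> p_pr l_pr; rewrite prime_coprime // prime_dvd_prod_primes. Qed.

Lemma prod_primes_dvd (n : nat) (l : seq nat) : uniq l -> all prime l ->
  all (dvdn^~ n) l -> \prod_(r <- l) r %| n.
Proof.
elim: l => [|r l IHl] /=; first by rewrite big_nil dvd1n.
case/andP=> rl l_uniq /andP[r_pr l_pr] /andP[rn ln].
by rewrite big_cons Gauss_dvd ?rn ?IHl ?coprime_prod_primes.
Qed.

Lemma prod_primes_dvdn (n : nat) : \prod_(p <- primes n) p %| n.
Proof.
rewrite prod_primes_dvd ?primes_uniq ?all_prime_primes //.
by apply/allP => p; rewrite mem_primes => /and3P[].
Qed.

Lemma tau_ge_exp2_primes (n : nat) : 0 < n -> 2 ^ size (primes n) <= tau n.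
Proof.
move=> n_gt0; set ps := primes n; set k := size ps.
have ps_prime : all prime ps := all_prime_primes n.
have nth_inj : injective (fun i : 'I_k => nth 0 ps i).
  move=> i j /eqP; rewrite nth_uniq ?primes_uniq ?ltn_ord // => /eqP; exact: val_inj.
pose sub (S : {set 'I_k}) := [seq nth 0 ps i | i : 'I_k <- enum S].
have sub_prime S : all prime (sub S).
  by apply/allP => r /mapP[i _ ->]; apply: (allP ps_prime); exact: mem_nth.
pose f S := \prod_(r <- sub S) r.
have f_inj : injective f.
  move=> S T fST; apply/setP => i.
  have i_pr : prime (nth 0 ps i) by apply: (allP ps_prime); exact: mem_nth.
  have memE (U : {set 'I_k}) : (i \in U) = (nth 0 ps i %| f U).
    by rewrite prime_dvd_prod_primes // (mem_map nth_inj) mem_enum.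
  by rewrite !memE fST.
have -> : 2 ^ k = size [seq f U | U <- enum (powerset [set: 'I_k])].
  by rewrite size_map -cardE card_powerset cardsT card_ord.
apply: uniq_leq_size => [|d /mapP[U _ ->]]; first by rewrite map_inj_uniq ?enum_uniq.
rewrite -dvdn_divisors // prod_primes_dvd //; first by rewrite map_inj_uniq ?enum_uniq.
apply/allP => r /mapP[i _ ->].
by have := mem_nth 0 (ltn_ord i); rewrite mem_primes => /and3P[].
Qed.

Lemma coprime_primesE (k n : nat) : 0 < n ->
  coprime k n = all (fun p => ~~ (p %| k)) (primes n).
Proof.
move=> n_gt0; apply/idP/allP => [kn p | ndvd].
  rewrite mem_primes => /and3P[p_pr _ pn]; apply: contraL pn => pk.
  by rewrite -prime_coprime // (coprime_dvdl pk kn).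
apply/negPn/negP => ncop; set g := gcdn k n.
have g_gt1 : 1 < g by rewrite ltn_neqAle eq_sym ncop gcdn_gt0 n_gt0 orbT.
have /andP[pk pn] : (pdiv g %| k) && (pdiv g %| n) by rewrite -dvdn_gcd pdiv_dvd.
by move/(_ (pdiv g)): ndvd; rewrite mem_primes pdiv_prime // n_gt0 pn pk => /(_ isT).
Qed.

Lemma coprime_prod_filter (k : nat) (l : seq nat) (P : pred nat) : all prime l ->
  coprime k (\prod_(p <- l | P p) p) = all (fun p => P p ==> ~~ (p %| k)) l.
Proof.
elim: l => [|r l IHl] /=; first by rewrite big_nil coprimen1.
case/andP=> r_pr l_pr; rewrite big_cons -IHl //.
by case: (P r) => //=; rewrite coprimeMr coprime_sym prime_coprime.
Qed.

Local Open Scope ring_scope.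
Local Open Scope complex_scope.

Lemma periodic_addmul (T : Type) (D : nat) (h : nat -> T) :
  (forall n, h (n + D)%N = h n) -> forall k n, h (n + k * D)%N = h n.
Proof.
move=> hD; elim=> [|k IHk] n; first by rewrite mul0n addn0.
by rewrite mulSn addnA IHk hD.
Qed.

Lemma big_nat_periodic_shift (V : zmodType) (q : nat) (G : nat -> V) :
  (forall n, G (n + q)%N = G n) ->
  forall k, \sum_(0 <= n < q) G (n + k)%N = \sum_(0 <= n < q) G n.
Proof.
move=> Gq; elim=> [|k IHk]; first by apply: eq_bigr => n _; rewrite addn0.
have recl := big_nat_recl q 0 (fun n => G (n + k)%N) (leq0n q).
have recr := big_nat_recr q 0 (fun n => G (n + k)%N) (leq0n q).
rewrite /= add0n addnC Gq in recl recr.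
rewrite -IHk; apply: (@addrI _ (G k)); under eq_bigr do rewrite addnS -addSn.
by rewrite -recl recr addrC.
Qed.

Section ExpSum.
Variable R : realType.

Lemma eD (x y : R) : e (x + y) = e x * e y.
Proof.
rewrite /e mulrDr cosD sinD; simpc.
by congr (_ +i* _); ring.
Qed.

Lemma e_nat (k : nat) : e (k%:R : R) = 1.
Proof.
rewrite /e (_ : 2 * pi * k%:R = 0 + (pi *+ 2) *+ k); last first.
  by rewrite add0r -mulr_natr -[pi *+ 2]mulr_natr; ring.
by rewrite (periodicn (@cosD2pi R)) (periodicn (@sinD2pi R)) cos0 sin0.
Qed.

Lemma e_addn (t : R) (k : nat) : e (t + k%:R) = e t.
Proof. by rewrite eD e_nat mulr1. Qed.

Lemma normr_e (t : R) : `|e t| = 1.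
Proof. by rewrite normc_def /= cos2Dsin2 sqrtr1. Qed.

Lemma e_frac_neq1 (r q : nat) : (0 < r < q)%N -> e (r%:R / q%:R : R) != 1.
Proof.
case/andP=> r_gt0 rq; set f := r%:R / q%:R : R.
have f_gt0 : 0 < f by rewrite divr_gt0 ?ltr0n // (leq_ltn_trans _ rq).
have f_lt1 : f < 1 by rewrite ltr_pdivrMr ?ltr0n ?(leq_ltn_trans _ rq) // mul1r ltr_nat.
have sin_gt0 : 0 < sin (pi * f).
  by apply: sin_gt0_pi; rewrite mulr_gt0 ?pi_gt0 //= -[ltRHS]mulr1 ltr_pM2l ?pi_gt0.
apply/eqP => /(congr1 (@complex.Re R)) /=.
(* cos (2 pi f) = 1 - 2 sin^2 (pi f) < 1 *)
rewrite (_ : 2 * pi * f = pi * f + pi * f); last by ring.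
rewrite cosD -!expr2 cos2sin2.
have : 0 < sin (pi * f) ^+ 2 by rewrite exprn_gt0.
lra.
Qed.

Lemma e_mul_frac_neq1 (a q d : nat) : coprime a q -> (0 < d < q)%N ->
  e ((a * d)%:R / q%:R : R) != 1.
Proof.
move=> aq /andP[d_gt0 dq]; have q_gt0 : (0 < q)%N by apply: leq_ltn_trans dq.
rewrite (divn_eq (a * d) q) natrD mulrDl natrM mulfK ?pnatr_eq0 -?lt0n // addrC.
rewrite e_addn e_frac_neq1 // ltn_mod q_gt0 andbT lt0n; apply: contraL dq => /eqP ad.
have : (q %| a * d)%N by rewrite /dvdn ad.
by rewrite Gauss_dvdr 1?coprime_sym // => /(dvdn_leq d_gt0); rewrite leqNgt.
Qed.

Lemma sum_e_periodic_eq0 (a q D : nat) (h : nat -> R[i]) : coprime a q ->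
  (0 < D < q)%N -> (D %| q)%N -> (forall n, h (n + D)%N = h n) ->
  \sum_(0 <= n < q) e ((a * n)%:R / q%:R) * h n = 0.
Proof.
move=> aq /andP[D_gt0 Dq] D_dvd_q hD.
have q_neq0 : (q%:R : R) != 0 by rewrite pnatr_eq0 -lt0n (leq_ltn_trans _ Dq).
set G := fun n => e ((a * n)%:R / q%:R) * h n.
have Gq n : G (n + q)%N = G n.
  rewrite /G (_ : h (n + q)%N = h n); last by rewrite -(divnK D_dvd_q) periodic_addmul.
  by rewrite mulnDr natrD mulrDl [(a * q)%:R]natrM mulfK // e_addn.
have GD n : G (n + D)%N = e ((a * D)%:R / q%:R) * G n.
  by rewrite /G hD mulnDr natrD mulrDl eD mulrA [e (_ / _) * _]mulrC.
have := big_nat_periodic_shift Gq D; under eq_bigr do rewrite GD; rewrite -mulr_sumr.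
(* S = e(aD/q) S with e(aD/q) != 1 *)
move/eqP; rewrite -subr_eq0 -{2}[\sum_(_ <= _ < _) _]mul1r -mulrBl mulf_eq0 subr_eq0.
by rewrite (negPf (e_mul_frac_neq1 aq _)) ?D_gt0 //= => /eqP.
Qed.

End ExpSum.

Definition special (p : nat) : bool := (p %% 4 == 3)%N && (p != 3%N).

Definition good_residue (p : nat) (z : int) : bool :=
  ~~ (p%:Z %| z)%Z && ~~ (special p && (p%:Z %| z - 1)%Z).

Lemma coprimez_s_primesE (q : nat) (z : int) : (0 < q)%N ->
  coprimez z q && coprimez (z - 1) (s q) = all (good_residue^~ z) (primes q).
Proof.
move=> q_gt0; rewrite !coprimezE !absz_nat (coprime_primesE _ q_gt0).
rewrite coprime_prod_filter ?all_prime_primes //.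
rewrite -all_predI; apply: eq_all => p /=.
by rewrite /good_residue /special !dvdzE !absz_nat; case: (p %% 4 == 3)%N; case: (p != 3)%N.
Qed.

Lemma natr_good_residue (V : pzRingType) (p : nat) (z : int) : prime p ->
  (good_residue p z)%:R = 1 - (p%:Z %| z)%Z%:R - (special p)%:R * (p%:Z %| z - 1)%Z%:R :> V.
Proof.
move=> p_pr; have : ~~ ((p%:Z %| z)%Z && (p%:Z %| z - 1)%Z).
  apply/negP => /andP[pz pz1]; have : (p%:Z %| z - (z - 1))%Z by rewrite rpredB.
  by rewrite opprB addrC subrK dvdz1 absz_nat => /eqP p1; move: p_pr; rewrite p1.
rewrite /good_residue.
by case: (p%:Z %| z)%Z; case: (p%:Z %| z - 1)%Z; case: (special p) => //= _;
  rewrite ?(mulr0, mul0r, mulr1, subr0, subrr).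
Qed.

Lemma good_residueDr (p : nat) (z k : int) : (p%:Z %| k)%Z ->
  good_residue p (z + k) = good_residue p z.
Proof. by move=> pk; rewrite /good_residue addrAC !(rpredDr _ pk). Qed.

Definition single_class (D : nat) (h : nat -> bool) :=
  (forall n, h (n + D)%N = h n) /\ {in h &, forall n1 n2, n1 = n2 %[mod D]}.

Lemma single_class1 : single_class 1 predT.
Proof. by split=> // n1 n2 _ _; rewrite !modn1. Qed.

Section Sieve.
Variables (R : realType) (a q m : nat) (b : int).
Hypotheses (coprime_aq : coprime a q) (q_gt0 : (0 < q)%N).

Let x n := (m * n)%:Z + b.
Let E n : R[i] := e ((a * n)%:R / q%:R).

Lemma single_class_refine (D d : nat) (h : nat -> bool) (c : int) :
  coprime D d -> coprime d m -> single_class D h ->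
  single_class (D * d) (fun n => (d%:Z %| x n - c)%Z && h n).
Proof.
move=> Dd dm [hD h_class]; split=> [n | n1 n2 /andP[d1 h1] /andP[d2 h2]].
  rewrite mulnC (periodic_addmul hD); congr (_ && _).
  have -> : x (n + d * D)%N - c = (x n - c) + (m * (d * D))%N%:Z.
    by rewrite /x mulnDr PoszD; ring.
  by rewrite rpredDr // PoszM dvdz_mull // PoszM dvdz_mulr.
apply/eqP; rewrite chinese_remainder // (h_class _ _ h1 h2) eqxx /=.
have : (d%:Z %| (x n1 - c) - (x n2 - c))%Z by rewrite rpredB.
have -> : (x n1 - c) - (x n2 - c) = m%:Z * (n1%:Z - n2%:Z) by rewrite /x !PoszM; ring.
by rewrite Gauss_dvdzr ?coprimezE ?absz_nat // -eqz_mod_dvd !modz_nat eqz_nat.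
Qed.

Lemma norm_sum_single_class_le (D : nat) (h : nat -> bool) :
  (D %| q)%N -> single_class D h ->
  `|\sum_(0 <= n < q) E n * (h n)%:R| <= (D == q)%:R.
Proof.
move=> Dq [hD h_class]; have [DqE | D_neq_q] := eqVneq D q; last first.
  have D_gt0 : (0 < D)%N by rewrite lt0n; apply: contraTneq Dq => ->; rewrite dvd0n -lt0n.
  have D_lt_q : (D < q)%N by rewrite ltn_neqAle D_neq_q dvdn_leq.
  rewrite (@sum_e_periodic_eq0 _ _ _ D (fun n => (h n)%:R)) ?D_gt0 ?normr0 //.
  by move=> n; rewrite hD.
subst D; apply: le_trans (ler_norm_sum _ _ _) _.
under eq_bigr do rewrite normrM normr_e mul1r normr_nat.
rewrite -natr_sum ler_nat big_mkord -big_mkcond /= sum1_card.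
apply/card_le1_eqP => i j hi hj; apply: val_inj.
by have := h_class _ _ hi hj; rewrite !modn_small.
Qed.

Let sieve_sum (h : nat -> bool) (L : seq nat) : R[i] :=
  \sum_(0 <= n < q) E n * (h n && all (good_residue^~ (x n)) L)%:R.

Lemma sieve_sum_cons (p : nat) (L : seq nat) (h : nat -> bool) : prime p ->
  sieve_sum h (p :: L) = sieve_sum h L
    - sieve_sum (fun n => (p%:Z %| x n - 0)%Z && h n) L
    - (special p)%:R * sieve_sum (fun n => (p%:Z %| x n - 1)%Z && h n) L.
Proof.
move=> p_pr; rewrite /sieve_sum mulr_sumr -!sumrB; apply: eq_bigr => n _ /=.
rewrite subr0; case: (h n) (all (good_residue^~ (x n)) L) => [] [] /=;
  by rewrite ?andbT ?andbF ?natr_good_residue ?mulr0 ?subr0 //; ring.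
Qed.

Lemma norm_sieve_sum_le (L : seq nat) (D : nat) (h : nat -> bool) :
  coprime q m -> uniq L -> all prime L -> (D * \prod_(p <- L) p %| q)%N ->
  coprime D (\prod_(p <- L) p)%N -> single_class D h ->
  `|sieve_sum h L| <= ((D * \prod_(p <- L) p == q) * 2 ^ size L)%N%:R.
Proof.
move=> coprime_qm; elim: L D h => [|p L IHL] D h /=.
  rewrite big_nil muln1 expn0 muln1 /sieve_sum => _ _ Dq _ hD.
  under eq_bigr do rewrite andbT.
  exact: norm_sum_single_class_le.
case/andP=> pL L_uniq /andP[p_pr L_prime]; rewrite big_cons => DpLq cop_D_pL hD.
have /andP[cop_Dp cop_DL] : coprime D p && coprime D (\prod_(r <- L) r)%N.
  by rewrite -coprimeMr.
have cop_pL := coprime_prod_primes p_pr L_prime pL.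
have cop_pm : coprime p m.
  apply: coprime_dvdl coprime_qm; apply: dvdn_trans DpLq.
  by rewrite dvdn_mull // dvdn_mulr.
have DL_dvd : (D * \prod_(r <- L) r %| q)%N.
  by apply: dvdn_trans DpLq; rewrite dvdn_mul // dvdn_mull.
have DL_neq_q : (D * \prod_(r <- L) r == q)%N = false.
  apply/negP => /eqP DLq; move: DpLq; rewrite mulnCA DLq => /(dvdn_leq q_gt0).
  by rewrite -[leqRHS]mul1n leq_pmul2r // leqNgt prime_gt1.
have DpL_dvd : (D * p * \prod_(r <- L) r %| q)%N by rewrite -mulnA.
have cop_DpL : coprime (D * p) (\prod_(r <- L) r) by rewrite coprimeMl cop_DL cop_pL.
have bound_h := IHL D h L_uniq L_prime DL_dvd cop_DL hD.
have bound_c c := IHL (D * p)%N _ L_uniq L_prime DpL_dvd cop_DpL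
  (single_class_refine c cop_Dp cop_pm hD).
rewrite DL_neq_q mul0n in bound_h.
rewrite sieve_sum_cons // mulnA expnS mulnCA mul2n -addnn natrD.
apply: le_trans (ler_normB _ _) _; apply: lerD.
  apply: le_trans (ler_normB _ _) _; rewrite -[leRHS]add0r.
  by apply: lerD; [exact: bound_h | exact: bound_c].
rewrite normrM normr_nat.
by case: (special p); rewrite ?mul1r ?mul0r //; exact: bound_c.
Qed.

Lemma sieve_sum_eq0 (p : nat) : prime p -> (p %| q)%N -> (p %| m)%N ->
  sieve_sum predT (primes q) = 0.
Proof.
move=> p_pr pq pm; rewrite /sieve_sum; set D := (q %/ p)%N.
have qE : q = (D * p)%N by rewrite divnK.
have D_gt0 : (0 < D)%N by rewrite divn_gt0 ?prime_gt0 // dvdn_leq.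
have D_lt_q : (D < q)%N by rewrite ltn_Pdiv ?prime_gt1.
(* q = D p divides m D, hence x (n + D) = x n mod q *)
apply: (@sum_e_periodic_eq0 _ _ _ D) => [||| n /=]; rewrite ?D_gt0 ?D_lt_q ?dvdn_div //.
rewrite (@eq_in_all _ _ (good_residue^~ (x n))) // => r.
rewrite mem_primes => /and3P[_ _ rq] /=.
rewrite (_ : x (n + D) = x n + (m * D)%N%:Z); last by rewrite /x mulnDr PoszD addrAC.
rewrite good_residueDr // dvdzE absz_nat (dvdn_trans rq) // {1}qE mulnC.
exact: dvdn_mul.
Qed.

End Sieve.

Theorem lemma5 (R : realType) (a q J w V : nat) (b : int) :
  (0 < a)%N -> (0 < q)%N -> q != 1%N -> coprime a q ->
  (5 <= J)%N -> (10 ^ (10 ^ 10) <= w)%N ->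
  amenable (WW J w) b ->
  (1 <= V)%N -> coprime q V ->
  `| \sum_(n < q | coprimez ((WW J w * V * n)%:Z + b) q%:Z
                   && coprimez ((WW J w * V * n)%:Z + b - 1) (s q)%:Z)
        e ((a * n)%:R / q%:R : R) |
  <= ((tau q)%:R * (coprime q (WW J w))%:R : R[i]).
Proof.
move=> _ q_gt0 _ aq _ _ _ _ qV; set W := WW J w; set m := (W * V)%N.
rewrite (_ : \sum_(n < q | _) _ = \sum_(0 <= n < q)
    e ((a * n)%:R / q%:R) * (all (good_residue^~ ((m * n)%:Z + b)) (primes q))%:R); last first.
  rewrite big_mkcond big_mkord; apply: eq_bigr => n _.
  by rewrite coprimez_s_primesE //; case: all; rewrite ?mulr1 ?mulr0.
have [qW | qW] := boolP (coprime q W); last first.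
  have g_gt1 : (1 < gcdn q W)%N by rewrite ltn_neqAle eq_sym qW gcdn_gt0 q_gt0.
  have /andP[pq pW] : (pdiv (gcdn q W) %| q)%N && (pdiv (gcdn q W) %| W)%N.
    by rewrite -dvdn_gcd pdiv_dvd.
  by rewrite (sieve_sum_eq0 R b aq q_gt0 (pdiv_prime g_gt1) pq (dvdn_mulr V pW)) normr0 mulr0.
have qm : coprime q m by rewrite coprimeMr qW qV.
have prod_primes_q : (1 * \prod_(p <- primes q) p %| q)%N.
  by rewrite mul1n prod_primes_dvdn.
apply: le_trans (norm_sieve_sum_le R b aq q_gt0 qm (primes_uniq q) (all_prime_primes q)
  prod_primes_q (coprime1n _) single_class1) _.
rewrite mulr1 ler_nat mul1n; case: eqP => _; rewrite ?mul0n ?mul1n //.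
exact: tau_ge_exp2_primes.
Qed.
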